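(* Let $m\ge3$. If the singleton partition $\mathcal S$ is the unique minimizer of $\Delta$ over partitions of $\mathcal M$ with at least two cells, then $\Delta_T(\mathcal S)<\Delta(\mathcal S)$ for every $T\subset\mathcal M$ with $|T|=m-1$.
   Context: Let $\mathcal M=\{1,\dots,m\}$, and let $X_{\mathcal M}$ be jointly distributed finite-valued random variables, with $X_A=(X_i:i\in A)$. For a partition $\mathcal P$ of $\mathcal M$ with $|\mathcal P|\ge2$, $\Delta(\mathcal P)=\frac1{|\mathcal P|-1}[\sum_{A\in\mathcal P}H(X_A)-H(X_{\mathcal M})]$. $\mathcal S=\{\{1\},\dots,\{m\}\}$ is the singleton partition. For $T\subset\mathcal M$ with $|T|=m-1$, $\Delta_T(\mathcal S)=\frac1{m-2}\big[\sum_{i\in T}H(X_i)-H(X_T)\big]$. *)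

From HB Require Import structures.
From Stdlib Require Import Reals.
From mathcomp Require Import all_boot.

Set Implicit Arguments.
Unset Strict Implicit.
Unset Printing Implicit Defensive.

HB.instance Definition _ :=
  Monoid.isComLaw.Build R (IZR Z0) Rplus (fun a b c => Logic.eq_sym (Rplus_assoc a b c)) Rplus_comm Rplus_0_l.

Notation "\rsum_ ( i | P ) F" := (\big[Rplus/(IZR Z0)]_(i | P) F)
  (at level 41, F at level 41, i at level 50).
Notation "\rsum_ ( i 'in' A ) F" := (\big[Rplus/(IZR Z0)]_(i in A) F)
  (at level 41, F at level 41, i, A at level 50).
Notation "\rsum_ i F" := (\big[Rplus/(IZR Z0)]_i F)
  (at level 41, F at level 41, i at level 0).

Local Open Scope R_scope.

Definition is_pmf (Omega : finType) (P : Omega -> R) : Prop :=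
  (forall w, 0 <= P w) /\ \rsum_w P w = 1.

Section Entropy.
Variables (Omega : finType) (P : Omega -> R) (m : nat).
(* X i : the i-th random variable X_{i+1}, finite-valued since Omega is finite *)
Variable X : 'I_m -> Omega -> nat.

Definition agree (A : {set 'I_m}) (w w' : Omega) : bool :=
  [forall i in A, X i w == X i w'].

Definition prob_at (A : {set 'I_m}) (w : Omega) : R :=
  \rsum_(w' | agree A w w') P w'.

(* Shannon entropy (natural log) of X_A:
   H(X_A) = - sum_w P(w) ln Pr[X_A = X_A(w)] = - sum_x p(x) ln p(x). *)
Definition entropy (A : {set 'I_m}) : R :=
  (- \rsum_w (P w * ln (prob_at A w))).

Definition Delta_part (Pt : {set {set 'I_m}}) : R :=
  ((\rsum_(A in Pt) entropy A - entropy setT) / (INR #|Pt| - 1)).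

Definition singleton_partition : {set {set 'I_m}} := [set [set i] | i : 'I_m].

Definition Delta_T_S (T : {set 'I_m}) : R :=
  ((\rsum_(i in T) entropy [set i] - entropy T) / (INR m - 2)).

End Entropy.

From HB Require Import structures.
From Stdlib Require Import Reals Lra.
From mathcomp Require Import all_boot zify.

(* Write T = M \ {j}. The two-block partition {T, {j}} has
   Delta = H(X_T) + H(X_j) - H(X_M), and minimality of the singleton partition
   S says Delta(S) = D / (m - 1) < Delta({T, {j}}), with
   D = sum_i H(X_i) - H(X_M). Since sum_{i in T} H(X_i) - H(X_T) equals
   D - Delta({T, {j}}), it is < D - D / (m - 1) = (m - 2) Delta(S). *)

Set Implicit Arguments.
Unset Strict Implicit.
Unset Printing Implicit Defensive.

Local Open Scope R_scope.

Lemma card_setC1P (U : finType) (T : {set U}) :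
  (0 < #|U|)%N -> #|T| = #|U|.-1 -> exists j, T = [set~ j].
Proof.
move=> U_gt0 cardT.
have : #|~: T| == 1%N by rewrite -(eqn_add2l #|T|) cardsC cardT addn1 prednK.
by case/cards1P=> j /(congr1 (@setC U)); rewrite setCK => ->; exists j.
Qed.

Lemma setC1_neq_set1 (U : finType) (j : U) :
  (2 < #|U|)%N -> [set~ j] != [set j].
Proof.
move=> U_gt2; apply/eqP => /(congr1 (fun A : {set U} => #|A|)).
by rewrite cardsC1 cards1; lia.
Qed.

Lemma partition_setC1 (U : finType) (j : U) :
  (2 < #|U|)%N -> partition [set [set~ j]; [set j]] [set: U].
Proof.
move=> U_gt2; have neq := setC1_neq_set1 j U_gt2.
apply/and3P; split.
- rewrite /cover big_setU1 /= ?big_set1 ?inE ?neq //.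
  by apply/eqP/setP=> i; rewrite !inE; case: (i == j).
- apply/trivIsetP=> A B /set2P[]-> /set2P[]-> //; rewrite ?eqxx //= => _;
    rewrite -setI_eq0; apply/eqP/setP=> i; rewrite !inE;
    by case: (i == j); rewrite ?andbF.
- by rewrite !inE !(eq_sym set0) -!cards_eq0 cardsC1 cards1; lia.
Qed.

Lemma card_singleton_partition (m : nat) : #|singleton_partition m| = m.
Proof. by rewrite card_imset ?card_ord //; exact: set1_inj. Qed.

Lemma rsum_singleton_partition (m : nat) (F : {set 'I_m} -> R) :
  \rsum_(A in singleton_partition m) F A = \rsum_i F [set i].
Proof. by rewrite big_imset //= => a b _ _ /set1_inj. Qed.

Lemma setC1_pair_neq_singleton_partition (m : nat) (j : 'I_m) :
  (2 < m)%N -> [set [set~ j]; [set j]] <> singleton_partition m.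
Proof.
move=> m_gt2 E.
have : [set~ j] \in singleton_partition m by rewrite -E !inE eqxx.
case/imsetP=> i _ /(congr1 (fun A : {set 'I_m} => #|A|)).
by rewrite cardsC1 cards1 card_ord; lia.
Qed.

Lemma Delta_part_pair (Omega : finType) (P : Omega -> R) (m : nat)
    (X : 'I_m -> Omega -> nat) (A B : {set 'I_m}) : A != B ->
  Delta_part P X [set A; B] = entropy P X A + entropy P X B - entropy P X setT.
Proof.
move=> neqAB; rewrite /Delta_part cards2 neqAB big_setU1 /= ?big_set1 ?inE //.
rewrite (_ : INR 2 - 1 = 1); last by simpl; lra.
by rewrite /Rdiv Rinv_1 Rmult_1_r.
Qed.

Lemma lt_drop_block_ratio (n D c : R) :
  2 < n -> D / (n - 1) < c -> (D - c) / (n - 2) < D / (n - 1).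
Proof.
move=> n_gt2 Dc.
have -> : D / (n - 1) = (D - D / (n - 1)) / (n - 2) by field; lra.
apply: Rmult_lt_compat_r; [apply: Rinv_0_lt_compat | ]; lra.
Qed.

Theorem lemma8 (Omega : finType) (P : Omega -> R) (m : nat)
  (X : 'I_m -> Omega -> nat) :
  is_pmf P ->
  (3 <= m)%N ->
  (forall Pt : {set {set 'I_m}},
      partition Pt [set: 'I_m] -> (2 <= #|Pt|)%N ->
      Pt <> singleton_partition m ->
      Delta_part P X (singleton_partition m) < Delta_part P X Pt) ->
  forall T : {set 'I_m}, #|T| = m.-1 ->
    Delta_T_S P X T < Delta_part P X (singleton_partition m).
Proof.
move=> _ m_gt2 S_min T cardT.
have card_m : #|'I_m| = m := card_ord m.
have [j ->] : exists j, T = [set~ j].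
  by apply: card_setC1P; rewrite card_m ?cardT // (leq_trans _ m_gt2).
have U_gt2 : (2 < #|'I_m|)%N by rewrite card_m.
have := S_min _ (partition_setC1 j U_gt2).
rewrite cards2 setC1_neq_set1 // Delta_part_pair ?setC1_neq_set1 //.
move=> /(_ isT (setC1_pair_neq_singleton_partition m_gt2)).
rewrite /Delta_part /Delta_T_S card_singleton_partition rsum_singleton_partition.
rewrite (bigD1 j) //= (eq_bigl (fun i => i \in [set~ j])) => [lt_S|i]; last by rewrite !inE.
set D := _ - entropy P X setT in lt_S *.
set c := _ - entropy P X setT in lt_S.
have -> : \rsum_(i in [set~ j]) entropy P X [set i] - entropy P X [set~ j] = D - c.
  by rewrite /D /c; ring.
by apply: lt_drop_block_ratio => //; apply: (lt_INR 2 m); apply/ltP.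
Qed.
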